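(* Assume $-1\in\mathbb F^2$ and let $J=JCK(Z,\delta)$. On $\mathcal A=\mathrm{Der}(J)^{[\bar1,\bar1]}$ define the multiplication $X\cdot Y=-\tau\bigl([\varphi(X),\varphi^2(Y)]\bigr)$ and the map $\bar X=-\tau(X)$, where $S_4$ acts on $\mathrm{Der}(J)$ by conjugation ($\sigma(X)=\sigma X\sigma^{-1}$) and $[\,,]$ is the supercommutator. Then $\bar X=X$ for all $X\in\mathcal A$, and the superalgebra $(\mathcal A,\cdot)$ is isomorphic to the Jordan superalgebra $K=Z\oplus Zy$ (a subalgebra of $J$); explicitly, $\Phi:K\to\mathcal A$, $f+gy\mapsto D(v_1,fv_2)+\sqrt{-1}\,D(v_3,gy)$ ($f,g\in Z$) is an isomorphism of superalgebras. Thus $(\mathcal A,\cdot,\bar{\ })$ is isomorphic to $K$ with the trivial involution.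
   Context: Let $\mathbb F$ be a field of characteristic $\neq 2$ with $-1\in\mathbb F^2$, $Z$ a unital commutative associative $\mathbb F$-algebra, and $\delta$ a derivation of $Z$ such that $Z\delta(Z)=Z$ (the $\mathbb F$-span of all products $f\delta(g)$, $f,g\in Z$, is $Z$). The Cheng-Kac Jordan superalgebra $J=JCK(Z,\delta)=J_{\bar0}\oplus J_{\bar1}$ is defined as follows: $J_{\bar0}=Z1\oplus Zw_1\oplus Zw_2\oplus Zw_3$ and $J_{\bar1}=Zx\oplus Zx_1\oplus Zx_2\oplus Zx_3$ are free $Z$-modules of rank 4; $J_{\bar0}$ is the $Z$-algebra $(\mathbb F1\oplus\mathbb Fw_1\oplus\mathbb Fw_2\oplus\mathbb Fw_3)\otimes_{\mathbb F}Z$ with $1$ the identity, $w_1^2=w_2^2=1$, $w_3^2=-1$, $w_iw_j=0$ for $i\ne j$. For $f,g\in Z$ and $i,j\in\{1,2,3\}$ the remaining products are: $f(gx)=(fg)x$, $f(gx_j)=(fg)x_j$, $(fw_i)(gx)=(\delta(f)g)x_i$, $(fw_i)(gx_j)=-(fg)x_{i\times j}$, $(fx)(gx)=\delta(f)g-f\delta(g)$, $(fx)(gx_j)=-(fg)w_j$, $(fx_i)(gx)=(fg)w_i$, $(fx_i)(gx_j)=0$, extended by supercommutativity ($ab=(-1)^{|a||b|}ba$), where $x_{1\times2}=-x_{2\times1}=x_3$, $x_{1\times3}=-x_{3\times1}=x_2$, $x_{3\times2}=-x_{2\times3}=x_1$, $x_{i\times i}=0$. $J$ is $\mathbb Z_2^2$-graded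 by $J^{[\bar0,\bar0]}=Z\oplus Zx$, $J^{[\bar1,\bar0]}=Zw_1\oplus Zx_1$, $J^{[\bar0,\bar1]}=Zw_2\oplus Zx_2$, $J^{[\bar1,\bar1]}=Zw_3\oplus Zx_3$, and $\mathrm{Der}(J)^{\alpha}$ denotes the (super) derivations mapping each $J^{\beta}$ into $J^{\alpha+\beta}$. $D(a,b)$ is $c\mapsto a(bc)-(-1)^{|a||b|}b(ac)$. Fix $\sqrt{-1}\in\mathbb F$ and set $v_1=\sqrt{-1}w_1$, $v_2=\sqrt{-1}w_2$, $v_3=w_3$, $y=x$, $y_1=\sqrt{-1}x_1$, $y_2=\sqrt{-1}x_2$, $y_3=x_3$. $S_4$ acts on $J$ by automorphisms via: $(1\,2)(3\,4)$ is the identity on $J^{[\bar0,\bar0]}\oplus J^{[\bar1,\bar1]}$ and $-1$ on $J^{[\bar1,\bar0]}\oplus J^{[\bar0,\bar1]}$; $(2\,3)(4\,1)$ is the identity on $J^{[\bar0,\bar0]}\oplus J^{[\bar1,\bar0]}$ and $-1$ on $J^{[\bar0,\bar1]}\oplus J^{[\bar1,\bar1]}$; $\varphi=(1\,2\,3)$ is $Z$-linear with $1\mapsto1$, $y\mapsto y$, $v_i\mapsto v_{i+1}$, $y_i\mapsto y_{i+1}$ (indices mod 3); $\tau=(1\,2)$ is $Z$-linear with $1\mapsto1$, $y\mapsto y$, $v_1\mapsto -v_2$, $v_2\mapsto-v_1$, $v_3\mapsto-v_3$, $y_1\mapsto-y_2$, $y_2\mapsto-y_1$, $y_3\mapsto-y_3$.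 *)

From HB Require Import structures.
From mathcomp Require Import all_boot all_order all_algebra.
Set Implicit Arguments. Unset Strict Implicit. Unset Printing Implicit Defensive.
Import Order.TTheory GRing.Theory Num.Theory.
Local Open Scope ring_scope.

Section CK.
Variables (F : fieldType) (Z : comAlgType F) (delta : Z -> Z) (sqrtm1 : F).

(* Basis index of J over Z: (false,0)=1, (false,k)=w_k, (true,0)=x, (true,k)=x_k.
   The first component is the super-parity. *)
Definition bidx := (bool * 'I_4)%type.
Definition J := {ffun bidx -> Z}.

Definition mk (b : bidx) (z : Z) : J := [ffun b' => if b' == b then z else 0].
Definition bas (p : bool) (k : nat) : bidx := (p, inord k).

Definition xcross (k l : nat) (z : Z) : J :=
  match k, l with
  | 1, 2 => mk (bas true 3) z
  | 2, 1 => mk (bas true 3) (- z)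
  | 1, 3 => mk (bas true 2) z
  | 3, 1 => mk (bas true 2) (- z)
  | 3, 2 => mk (bas true 1) z
  | 2, 3 => mk (bas true 1) (- z)
  | _, _ => 0
  end.

Definition wsq (k : nat) : Z := if k == 3 then -1 else 1.

Definition prod_ev_od (k : nat) (f : Z) (l : nat) (g : Z) : J :=
  if k == 0 then mk (bas true l) (f * g)            (* f(gx)=(fg)x, f(gx_j)=(fg)x_j *)
  else if l == 0 then mk (bas true k) (delta f * g)  (* (fw_i)(gx)=(delta(f)g)x_i *)
  else xcross k l (- (f * g)).                        (* (fw_i)(gx_j)=-(fg)x_{ixj} *)

Definition bprod (b1 : bidx) (f : Z) (b2 : bidx) (g : Z) : J :=
  let k := nat_of_ord b1.2 in let l := nat_of_ord b2.2 in
  match b1.1, b2.1 with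
  | false, false =>
      if k == 0 then mk (bas false l) (f * g)
      else if l == 0 then mk (bas false k) (f * g)
      else if k == l then mk (bas false 0) (wsq k * (f * g))
      else 0
  | false, true => prod_ev_od k f l g
  | true, false => prod_ev_od l g k f     (* supercommutativity, even*odd *)
  | true, true =>
      if k == 0 then
        (if l == 0 then mk (bas false 0) (delta f * g - f * delta g)
         else mk (bas false l) (- (f * g)))
      else if l == 0 then mk (bas false k) (f * g)
      else 0
  end.

Definition mulJ (a c : J) : J := \sum_(b1 : bidx) \sum_(b2 : bidx) bprod b1 (a b1) b2 (c b2).

Definition zscale (f : Z) (a : J) : J := [ffun b => f * a b].

Definition spr (p : bool) (a : J) : J := [ffun b => if b.1 == p then a b else 0].

Definition zdeg (k : 'I_4) : bool * bool :=
  match nat_of_ord k with 0 => (false, false) | 1 => (true, false)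
                     | 2 => (false, true) | _ => (true, true) end.
Definition zpr (beta : bool * bool) (a : J) : J :=
  [ffun b => if zdeg b.2 == beta then a b else 0].
Definition zadd (al be : bool * bool) : bool * bool := (addb al.1 be.1, addb al.2 be.2).

Definition is_sder (p : bool) (D : J -> J) : Prop :=
  (forall (r : F) (a b : J), D (r *: a + b) = r *: D a + D b) /\
  (forall q a, D (spr q a) = spr (addb q p) (D (spr q a))) /\
  (forall q a b, D (mulJ (spr q a) b) =
     mulJ (D (spr q a)) b + (-1) ^+ (p && q) *: mulJ (spr q a) (D b)).

Definition isDer (D : J -> J) : Prop :=
  exists D0 D1, is_sder false D0 /\ is_sder true D1 /\ forall a, D a = D0 a + D1 a.

Definition isDer_deg (al : bool * bool) (D : J -> J) : Prop :=
  isDer D /\ forall be a, D (zpr be a) = zpr (zadd al be) (D (zpr be a)).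

Definition mpart (p : bool) (X : J -> J) : J -> J :=
  fun a => spr p (X (spr false a)) + spr (~~ p) (X (spr true a)).
Definition hom_map (p : bool) (X : J -> J) : Prop := forall a, X a = mpart p X a.

Definition scomm (X Y : J -> J) : J -> J := fun a =>
  \sum_(p : bool) \sum_(q : bool)
     (mpart p X (mpart q Y a) - (-1) ^+ (p && q) *: mpart q Y (mpart p X a)).

(* the basis v_k, y_k and the automorphisms phi = (1 2 3), tau = (1 2) *)
Definition vb (p : bool) (k : nat) : J :=
  if (k == 1) || (k == 2) then sqrtm1 *: mk (bas p k) 1 else mk (bas p k) 1.
(* e_(p,k) = cw k *: vb p k, since w_k = -sqrt(-1) v_k for k=1,2 *)
Definition cw (k : nat) : F := if (k == 1) || (k == 2) then - sqrtm1 else 1.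
Definition zlin (img : bidx -> J) (a : J) : J := \sum_(b : bidx) zscale (a b) (img b).
Definition cyc3 (k : nat) : nat := match k with 0 => 0 | 1 => 2 | 2 => 3 | _ => 1 end.
Definition sw12 (k : nat) : nat := match k with 1 => 2 | 2 => 1 | k => k end.
Definition phiJ : J -> J :=
  zlin (fun b => cw b.2 *: vb b.1 (cyc3 b.2)).
Definition tauJ : J -> J :=
  zlin (fun b => cw b.2 *: (if nat_of_ord b.2 == 0 then vb b.1 0 else - vb b.1 (sw12 b.2))).

Definition phiD (X : J -> J) : J -> J := phiJ \o X \o (phiJ \o phiJ).   (* phi^-1 = phi^2 *)
Definition phi2D (X : J -> J) : J -> J := (phiJ \o phiJ) \o X \o phiJ.
Definition tauD (X : J -> J) : J -> J := tauJ \o X \o tauJ.             (* tau^-1 = tau *)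

Definition ckmulA (X Y : J -> J) : J -> J := fun a => - tauD (scomm (phiD X) (phi2D Y)) a.
Definition ckbarA (X : J -> J) : J -> J := fun a => - tauD X a.

Definition Dop (pa pb : bool) (a b : J) : J -> J :=
  fun c => mulJ a (mulJ b c) - (-1) ^+ (pa && pb) *: mulJ b (mulJ a c).

(* K = Z + Zy as a subset of J (y = x) *)
Definition inK (a : J) : Prop := forall b : bidx, nat_of_ord b.2 != 0 -> a b = 0.

Definition PhiK (a : J) : J -> J := fun c =>
  Dop false false (vb false 1) (zscale (a (bas false 0)) (vb false 2)) c
  + sqrtm1 *: Dop false true (vb false 3) (zscale (a (bas true 0)) (vb true 0)) c.

End CK.

(* The proof works in coordinates: an element of J is the 8-tuple of its
   Z-coordinates along 1, w_1, w_2, w_3, x, x_1, x_2, x_3 (mkJ).  We first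
   compute the product of J, the automorphisms phi, tau and the maps Phi a
   in coordinates; afterwards every identity between explicit elements of J
   reduces to eight identities in the commutative algebra Z, closed by ring
   once delta is pushed through sums and products by the Leibniz rule.
   - Phi(f + g y) = Deven f + Dodd g, an even plus an odd superderivation of
     degree [1,1]; so Phi maps K into A.  Injectivity, F-linearity, parity,
     bar-invariance and multiplicativity of Phi are coordinate computations.
   - Surjectivity (classification of A): for X = D0 + D1 in A the degree
     condition makes D0, D1 send each basis monomial h e_b to a monomial;
     the Leibniz rule on a few products of basis monomials expresses all
     these coefficients through f = (X w_1)_{w_2} and G = (X x_3)_1, giving
     X = Phi(f - sqrt(-1) G y).
   - Finally bar X = X on A because bar (Phi a) = Phi a. *)

From Pilot Require Import Defs.
From HB Require Import structures.
From mathcomp Require Import all_boot all_order all_algebra.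
From mathcomp Require Import ring.
From Stdlib Require Import FunctionalExtensionality.
Import GRing.Theory.
Set Implicit Arguments.
Unset Strict Implicit.
Unset Printing Implicit Defensive.
Local Open Scope ring_scope.

Definition i0 : 'I_4 := @Ordinal 4 0 isT.
Definition i1 : 'I_4 := @Ordinal 4 1 isT.
Definition i2 : 'I_4 := @Ordinal 4 2 isT.
Definition i3 : 'I_4 := @Ordinal 4 3 isT.

Lemma inord_i0 : (inord 0 : 'I_4) = i0. Proof. by apply/val_inj; rewrite /= inordK. Qed.
Lemma inord_i1 : (inord 1 : 'I_4) = i1. Proof. by apply/val_inj; rewrite /= inordK. Qed.
Lemma inord_i2 : (inord 2 : 'I_4) = i2. Proof. by apply/val_inj; rewrite /= inordK. Qed.
Lemma inord_i3 : (inord 3 : 'I_4) = i3. Proof. by apply/val_inj; rewrite /= inordK. Qed.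

Lemma sum_bidx (R : nmodType) (G : bidx -> R) :
  \sum_(b : bidx) G b = G (false,i0) + G (false,i1) + G (false,i2) + G (false,i3)
     + (G (true,i0) + G (true,i1) + G (true,i2) + G (true,i3)).
Proof.
rewrite (eq_bigr (fun b : bool * 'I_4 => G (b.1, b.2))); last by case.
rewrite -(pair_bigA _ (fun p k => G (p,k))) /= big_bool /= addrC.
rewrite !big_ord_recl !big_ord0 !addr0 !addrA.
have -> : (lift ord0 ord0 : 'I_4) = i1 by apply/val_inj.
have -> : (lift ord0 (lift ord0 ord0) : 'I_4) = i2 by apply/val_inj.
have -> : (lift ord0 (lift ord0 (lift ord0 ord0)) : 'I_4) = i3 by apply/val_inj.
by have -> : (ord0 : 'I_4) = i0 by apply/val_inj.
Qed.

Local Notation "'W0' a" := (a (false, i0)) (at level 10, a at level 8).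
Local Notation "'W1' a" := (a (false, i1)) (at level 10, a at level 8).
Local Notation "'W2' a" := (a (false, i2)) (at level 10, a at level 8).
Local Notation "'W3' a" := (a (false, i3)) (at level 10, a at level 8).
Local Notation "'X0' a" := (a (true, i0)) (at level 10, a at level 8).
Local Notation "'X1' a" := (a (true, i1)) (at level 10, a at level 8).
Local Notation "'X2' a" := (a (true, i2)) (at level 10, a at level 8).
Local Notation "'X3' a" := (a (true, i3)) (at level 10, a at level 8).

Section Coordinates.
Variables (F : fieldType) (Z : comAlgType F).
Local Notation J := (J Z).

Definition mkJ (z0 z1 z2 z3 y0 y1 y2 y3 : Z) : J := [ffun b : bidx => if b.1 then
   (match nat_of_ord b.2 with 0 => y0 | 1 => y1 | 2 => y2 | _ => y3 end) else
   (match nat_of_ord b.2 with 0 => z0 | 1 => z1 | 2 => z2 | _ => z3 end)].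

Lemma Jext (a b : J) : W0 a = W0 b -> W1 a = W1 b -> W2 a = W2 b -> W3 a = W3 b ->
  X0 a = X0 b -> X1 a = X1 b -> X2 a = X2 b -> X3 a = X3 b -> a = b.
Proof.
move=> e0 e1 e2 e3 f0 f1 f2 f3; apply/ffunP => -[[] [[|[|[|[|k]]]] Hk]] //=.
all: by [ have -> : Ordinal Hk = i0 by apply/val_inj
        | have -> : Ordinal Hk = i1 by apply/val_inj
        | have -> : Ordinal Hk = i2 by apply/val_inj
        | have -> : Ordinal Hk = i3 by apply/val_inj ].
Qed.

Lemma mkJ_eta (a : J) : a = mkJ (W0 a) (W1 a) (W2 a) (W3 a) (X0 a) (X1 a) (X2 a) (X3 a).
Proof. by apply: Jext; rewrite ffunE. Qed.

Lemma mkJ_eq z0 z1 z2 z3 y0 y1 y2 y3 z0' z1' z2' z3' y0' y1' y2' y3' :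
  z0 = z0' -> z1 = z1' -> z2 = z2' -> z3 = z3' -> y0 = y0' -> y1 = y1' -> y2 = y2' -> y3 = y3' ->
  mkJ z0 z1 z2 z3 y0 y1 y2 y3 = mkJ z0' z1' z2' z3' y0' y1' y2' y3'.
Proof. by move=> -> -> -> -> -> -> -> ->. Qed.

Section CoordinateVectors.
Variables (z0 z1 z2 z3 y0 y1 y2 y3 : Z).
Local Notation A := (mkJ z0 z1 z2 z3 y0 y1 y2 y3).

Lemma W0E : W0 A = z0. Proof. by rewrite ffunE. Qed.
Lemma W1E : W1 A = z1. Proof. by rewrite ffunE. Qed.
Lemma W2E : W2 A = z2. Proof. by rewrite ffunE. Qed.
Lemma W3E : W3 A = z3. Proof. by rewrite ffunE. Qed.
Lemma X0E : X0 A = y0. Proof. by rewrite ffunE. Qed.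
Lemma X1E : X1 A = y1. Proof. by rewrite ffunE. Qed.
Lemma X2E : X2 A = y2. Proof. by rewrite ffunE. Qed.
Lemma X3E : X3 A = y3. Proof. by rewrite ffunE. Qed.

Lemma mkJ_sum : A =
  mkJ z0 0 0 0 0 0 0 0 + mkJ 0 z1 0 0 0 0 0 0 + mkJ 0 0 z2 0 0 0 0 0 + mkJ 0 0 0 z3 0 0 0 0 +
  (mkJ 0 0 0 0 y0 0 0 0 + mkJ 0 0 0 0 0 y1 0 0 + mkJ 0 0 0 0 0 0 y2 0 + mkJ 0 0 0 0 0 0 0 y3).
Proof. by apply: Jext; rewrite !ffunE /= ?(addr0, add0r). Qed.

Lemma spr_evenE : spr false A = mkJ z0 z1 z2 z3 0 0 0 0.
Proof. by apply: Jext; rewrite !ffunE. Qed.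
Lemma spr_oddE : spr true A = mkJ 0 0 0 0 y0 y1 y2 y3.
Proof. by apply: Jext; rewrite !ffunE. Qed.
Lemma zpr00E : zpr (false,false) A = mkJ z0 0 0 0 y0 0 0 0.
Proof. by apply: Jext; rewrite !ffunE. Qed.
Lemma zpr10E : zpr (true,false) A = mkJ 0 z1 0 0 0 y1 0 0.
Proof. by apply: Jext; rewrite !ffunE. Qed.
Lemma zpr01E : zpr (false,true) A = mkJ 0 0 z2 0 0 0 y2 0.
Proof. by apply: Jext; rewrite !ffunE. Qed.
Lemma zpr11E : zpr (true,true) A = mkJ 0 0 0 z3 0 0 0 y3.
Proof. by apply: Jext; rewrite !ffunE. Qed.

Variables (z0' z1' z2' z3' y0' y1' y2' y3' : Z).
Local Notation B := (mkJ z0' z1' z2' z3' y0' y1' y2' y3').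

Lemma addE : A + B = mkJ (z0 + z0') (z1 + z1') (z2 + z2') (z3 + z3')
                         (y0 + y0') (y1 + y1') (y2 + y2') (y3 + y3').
Proof. by apply: Jext; rewrite !ffunE. Qed.
Lemma subE : A - B = mkJ (z0 - z0') (z1 - z1') (z2 - z2') (z3 - z3')
                         (y0 - y0') (y1 - y1') (y2 - y2') (y3 - y3').
Proof. by apply: Jext; rewrite !ffunE. Qed.
Lemma oppE : - A = mkJ (- z0) (- z1) (- z2) (- z3) (- y0) (- y1) (- y2) (- y3).
Proof. by apply: Jext; rewrite !ffunE. Qed.
Lemma scaleE (r : F) : r *: A = mkJ (r%:A * z0) (r%:A * z1) (r%:A * z2) (r%:A * z3)
                                    (r%:A * y0) (r%:A * y1) (r%:A * y2) (r%:A * y3).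
Proof. by apply: Jext; rewrite !ffunE /= mulr_algl. Qed.
Lemma zscaleE (f : Z) : zscale f A = mkJ (f * z0) (f * z1) (f * z2) (f * z3)
                                         (f * y0) (f * y1) (f * y2) (f * y3).
Proof. by apply: Jext; rewrite !ffunE. Qed.
End CoordinateVectors.

Lemma mk_f0 z : mk (false, i0) z = mkJ z 0 0 0 0 0 0 0. Proof. by apply: Jext; rewrite /mk !ffunE /=. Qed.
Lemma mk_f1 z : mk (false, i1) z = mkJ 0 z 0 0 0 0 0 0. Proof. by apply: Jext; rewrite /mk !ffunE /=. Qed.
Lemma mk_f2 z : mk (false, i2) z = mkJ 0 0 z 0 0 0 0 0. Proof. by apply: Jext; rewrite /mk !ffunE /=. Qed.
Lemma mk_f3 z : mk (false, i3) z = mkJ 0 0 0 z 0 0 0 0. Proof. by apply: Jext; rewrite /mk !ffunE /=. Qed.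
Lemma mk_t0 z : mk (true, i0) z = mkJ 0 0 0 0 z 0 0 0. Proof. by apply: Jext; rewrite /mk !ffunE /=. Qed.
Lemma mk_t1 z : mk (true, i1) z = mkJ 0 0 0 0 0 z 0 0. Proof. by apply: Jext; rewrite /mk !ffunE /=. Qed.
Lemma mk_t2 z : mk (true, i2) z = mkJ 0 0 0 0 0 0 z 0. Proof. by apply: Jext; rewrite /mk !ffunE /=. Qed.
Lemma mk_t3 z : mk (true, i3) z = mkJ 0 0 0 0 0 0 0 z. Proof. by apply: Jext; rewrite /mk !ffunE /=. Qed.

Lemma inK_coords (a : J) : inK a -> a = mkJ (W0 a) 0 0 0 (X0 a) 0 0 0.
Proof. by move=> Ka; apply: Jext; rewrite !ffunE //=; apply: Ka. Qed.

Lemma spr_add p (a b : J) : spr p (a + b) = spr p a + spr p b.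
Proof. by apply/ffunP => x; rewrite !ffunE; case: (x.1 == p); rewrite ?addr0. Qed.

Lemma spr_orth p (a : J) : spr p (spr (~~ p) a) = 0.
Proof. by apply/ffunP => -[q k]; rewrite !ffunE /=; case: p; case: q. Qed.

Lemma scommE (X Y : J -> J) c : scomm X Y c =
  (mpart true X (mpart true Y c) + mpart true Y (mpart true X c)
   + (mpart true X (mpart false Y c) - mpart false Y (mpart true X c)))
  + (mpart false X (mpart true Y c) - mpart true Y (mpart false X c)
   + (mpart false X (mpart false Y c) - mpart false Y (mpart false X c))).
Proof. by rewrite /scomm !big_bool /= expr1 expr0 scaleN1r !scale1r opprK. Qed.

End Coordinates.

Lemma eq_from_multiple (R : pzRingType) (c s t u v : R) :
  u = v -> s - t = c * (u - v) -> s = t.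
Proof. by move=> -> /eqP; rewrite subrr mulr0 subr_eq0 => /eqP. Qed.
Arguments eq_from_multiple {R} c {s t u v}.

Section ProductTable.
Variables (F : fieldType) (Z : comAlgType F) (delta : Z -> Z).
Local Notation J := (J Z).
Local Notation mulJ := (mulJ delta).

Lemma mulJ_coords (a c : J) : mulJ a c = mkJ
 (W0 a * W0 c + W1 a * W1 c + W2 a * W2 c - W3 a * W3 c + delta (X0 a) * X0 c - X0 a * delta (X0 c))
 (W0 a * W1 c + W1 a * W0 c - X0 a * X1 c + X1 a * X0 c)
 (W0 a * W2 c + W2 a * W0 c - X0 a * X2 c + X2 a * X0 c)
 (W0 a * W3 c + W3 a * W0 c - X0 a * X3 c + X3 a * X0 c)
 (W0 a * X0 c + X0 a * W0 c)
 (W0 a * X1 c + delta (W1 a) * X0 c - W3 a * X2 c + W2 a * X3 c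
   + (W0 c * X1 a + delta (W1 c) * X0 a - W3 c * X2 a + W2 c * X3 a))
 (W0 a * X2 c + delta (W2 a) * X0 c - W1 a * X3 c + W3 a * X1 c
   + (W0 c * X2 a + delta (W2 c) * X0 a - W1 c * X3 a + W3 c * X1 a))
 (W0 a * X3 c + delta (W3 a) * X0 c - W1 a * X2 c + W2 a * X1 c
   + (W0 c * X3 a + delta (W3 c) * X0 a - W1 c * X2 a + W2 c * X1 a)).
Proof.
apply: Jext; rewrite /Defs.mulJ sum_bidx !sum_bidx /bprod /prod_ev_od /xcross /=;
  rewrite /bas ?inord_i0 ?inord_i1 ?inord_i2 ?inord_i3 /mk !ffunE /= /wsq /=; ring.
Qed.

Lemma mulE z0 z1 z2 z3 y0 y1 y2 y3 z0' z1' z2' z3' y0' y1' y2' y3' :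
  mulJ (mkJ z0 z1 z2 z3 y0 y1 y2 y3) (mkJ z0' z1' z2' z3' y0' y1' y2' y3') = mkJ
 (z0 * z0' + z1 * z1' + z2 * z2' - z3 * z3' + delta y0 * y0' - y0 * delta y0')
 (z0 * z1' + z1 * z0' - y0 * y1' + y1 * y0')
 (z0 * z2' + z2 * z0' - y0 * y2' + y2 * y0')
 (z0 * z3' + z3 * z0' - y0 * y3' + y3 * y0')
 (z0 * y0' + y0 * z0')
 (z0 * y1' + delta z1 * y0' - z3 * y2' + z2 * y3' + (z0' * y1 + delta z1' * y0 - z3' * y2 + z2' * y3))
 (z0 * y2' + delta z2 * y0' - z1 * y3' + z3 * y1' + (z0' * y2 + delta z2' * y0 - z1' * y3 + z3' * y1))
 (z0 * y3' + delta z3 * y0' - z1 * y2' + z2 * y1' + (z0' * y3 + delta z3' * y0 - z1' * y2 + z2' * y1)).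
Proof. by rewrite mulJ_coords !ffunE. Qed.
End ProductTable.

Arguments Defs.mulJ : simpl never.

Section CKDerivations.
Variables (F : fieldType) (Z : comAlgType F) (delta : {linear Z -> Z}) (sqrtm1 : F).
Hypothesis hsqrt : sqrtm1 * sqrtm1 = -1.
Hypothesis hder : forall f g : Z, delta (f * g) = delta f * g + f * delta g.

Local Notation J := (J Z).
Local Notation mulJ := (mulJ delta).
Local Notation I := (sqrtm1%:A : Z).
Local Notation Phi := (PhiK delta sqrtm1).

Lemma I_sqr : I * I = -1.
Proof. by rewrite mulr_algl scalerA hsqrt scaleN1r. Qed.

(* delta kills the scalars F1 (Leibniz rule at 1 * 1). *)
Lemma delta1 : delta 1 = 0.
Proof.
have h := hder 1 1; rewrite !mulr1 mul1r in h.
by apply: (addrI (delta 1)); rewrite addr0 -h.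
Qed.

Lemma delta_scalar (r : F) : delta r%:A = 0.
Proof. by rewrite linearZ /= delta1 scaler0. Qed.

Lemma delta0 : delta 0 = 0. Proof. exact: raddf0. Qed.
Lemma deltaD x y : delta (x + y) = delta x + delta y. Proof. exact: raddfD. Qed.
Lemma deltaB x y : delta (x - y) = delta x - delta y. Proof. exact: raddfB. Qed.
Lemma deltaN x : delta (- x) = - delta x. Proof. exact: raddfN. Qed.
Lemma deltaZ (r : F) x : delta (r *: x) = r *: delta x. Proof. exact: linearZ. Qed.

Ltac push_delta :=
  rewrite ?(deltaD, deltaB, deltaN, delta0, hder, delta_scalar, deltaZ, delta1).

Lemma phiJ_mk (z0 z1 z2 z3 y0 y1 y2 y3 : Z) : phiJ sqrtm1 (mkJ z0 z1 z2 z3 y0 y1 y2 y3) =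
  mkJ z0 (I * z3) z1 (- I * z2) y0 (I * y3) y1 (- I * y2).
Proof.
rewrite /phiJ /zlin sum_bidx /= /vb /cw /bas /= ?inord_i0 ?inord_i1 ?inord_i2 ?inord_i3.
rewrite ?mk_f0 ?mk_f1 ?mk_f2 ?mk_f3 ?mk_t0 ?mk_t1 ?mk_t2 ?mk_t3 ?W0E ?W1E ?W2E ?W3E ?X0E ?X1E ?X2E ?X3E.
repeat progress rewrite ?oppE ?scaleE ?zscaleE ?addE.
by apply: mkJ_eq; rewrite ?scaleNr ?scale1r; ring: I_sqr.
Qed.

Lemma tauJ_mk (z0 z1 z2 z3 y0 y1 y2 y3 : Z) : tauJ sqrtm1 (mkJ z0 z1 z2 z3 y0 y1 y2 y3) =
  mkJ z0 (- z2) (- z1) (- z3) y0 (- y2) (- y1) (- y3).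
Proof.
rewrite /tauJ /zlin sum_bidx /= /vb /cw /bas /= ?inord_i0 ?inord_i1 ?inord_i2 ?inord_i3.
rewrite ?mk_f0 ?mk_f1 ?mk_f2 ?mk_f3 ?mk_t0 ?mk_t1 ?mk_t2 ?mk_t3 ?W0E ?W1E ?W2E ?W3E ?X0E ?X1E ?X2E ?X3E.
repeat progress rewrite ?oppE ?scaleE ?zscaleE ?addE.
by apply: mkJ_eq; rewrite ?scaleNr ?scale1r; ring: I_sqr.
Qed.

(* Deven f = D(v_1, f v_2), the even part of Phi(f + g y). *)
Definition Deven (f : Z) (c : J) : J :=
  mkJ 0 (- f * W2 c) (f * W1 c) 0 0 (- f * X2 c) (f * X1 c) (delta f * X0 c).

(* Dodd g = sqrt(-1) D(v_3, g y), the odd part of Phi(f + g y). *)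
Definition Dodd (g : Z) (c : J) : J :=
  mkJ (I * g * X3 c) (- I * g * X2 c) (I * g * X1 c)
      (I * (X0 c * delta g - g * delta (X0 c))) (I * g * W3 c)
      (- I * g * delta (W2 c)) (I * g * delta (W1 c)) (- I * g * delta (W0 c)).

Lemma Deven_mk f (z0 z1 z2 z3 y0 y1 y2 y3 : Z) : Deven f (mkJ z0 z1 z2 z3 y0 y1 y2 y3) =
  mkJ 0 (- f * z2) (f * z1) 0 0 (- f * y2) (f * y1) (delta f * y0).
Proof. by rewrite /Deven !ffunE. Qed.

Lemma Dodd_mk g (z0 z1 z2 z3 y0 y1 y2 y3 : Z) : Dodd g (mkJ z0 z1 z2 z3 y0 y1 y2 y3) =
  mkJ (I * g * y3) (- I * g * y2) (I * g * y1)
      (I * (y0 * delta g - g * delta y0)) (I * g * z3)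
      (- I * g * delta z2) (I * g * delta z1) (- I * g * delta z0).
Proof. by rewrite /Dodd !ffunE. Qed.

Ltac coords := repeat progress rewrite ?spr_evenE ?spr_oddE ?zpr00E ?zpr10E ?zpr01E ?zpr11E
  ?phiJ_mk ?tauJ_mk ?Deven_mk ?Dodd_mk ?addE ?subE ?oppE ?scaleE ?zscaleE ?mulE
  ?W0E ?W1E ?W2E ?W3E ?X0E ?X1E ?X2E ?X3E ?expr0 ?expr1 ?scale1r ?scaleN1r.
Ltac by_coords := coords; apply: mkJ_eq; push_delta; ring: I_sqr.

Lemma PhiK_split (a c : J) : Phi a c = Deven (W0 a) c + Dodd (X0 a) c.
Proof.
rewrite (mkJ_eta c) /PhiK /Dop /vb /bas ?inord_i0 ?inord_i1 ?inord_i2 ?inord_i3 /=.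
rewrite ?mk_f0 ?mk_f1 ?mk_f2 ?mk_f3 ?mk_t0 ?mk_t1 ?mk_t2 ?mk_t3.
by_coords.
Qed.

Lemma Deven_linear f (r : F) a b : Deven f (r *: a + b) = r *: Deven f a + Deven f b.
Proof. by rewrite (mkJ_eta a) (mkJ_eta b); by_coords. Qed.

Lemma Dodd_linear g (r : F) a b : Dodd g (r *: a + b) = r *: Dodd g a + Dodd g b.
Proof. by rewrite (mkJ_eta a) (mkJ_eta b); by_coords. Qed.

Lemma Deven_parity f q a : Deven f (spr q a) = spr (addb q false) (Deven f (spr q a)).
Proof. by rewrite (mkJ_eta a); case: q; rewrite [addb _ _]/=; by_coords. Qed.

Lemma Dodd_parity g q a : Dodd g (spr q a) = spr (addb q true) (Dodd g (spr q a)).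
Proof. by rewrite (mkJ_eta a); case: q; rewrite [addb _ _]/=; by_coords. Qed.

Lemma Deven_Leibniz f q (a b : J) : Deven f (mulJ (spr q a) b) =
  mulJ (Deven f (spr q a)) b + (-1) ^+ (false && q) *: mulJ (spr q a) (Deven f b).
Proof. by rewrite (mkJ_eta a) (mkJ_eta b); case: q; rewrite [_ && _]/=; by_coords. Qed.

Lemma Dodd_Leibniz g q (a b : J) : Dodd g (mulJ (spr q a) b) =
  mulJ (Dodd g (spr q a)) b + (-1) ^+ (true && q) *: mulJ (spr q a) (Dodd g b).
Proof. by rewrite (mkJ_eta a) (mkJ_eta b); case: q; rewrite [_ && _]/=; by_coords. Qed.

Lemma Deven_sder f : is_sder delta false (Deven f).
Proof. by split; [exact: Deven_linear | split; [exact: Deven_parity | exact: Deven_Leibniz]]. Qed.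

Lemma Dodd_sder g : is_sder delta true (Dodd g).
Proof. by split; [exact: Dodd_linear | split; [exact: Dodd_parity | exact: Dodd_Leibniz]]. Qed.

Lemma Phi_degree a be c :
  Phi a (zpr be c) = zpr (zadd (true, true) be) (Phi a (zpr be c)).
Proof.
case: be => p q; rewrite !PhiK_split (mkJ_eta c).
by case: p; case: q; rewrite [zadd _ _]/=; by_coords.
Qed.

Lemma Phi_in_A a : isDer_deg delta (true, true) (Phi a).
Proof.
split; last exact: Phi_degree.
exists (Deven (W0 a)), (Dodd (X0 a)).
by split; [exact: Deven_sder | split; [exact: Dodd_sder | exact: PhiK_split]].
Qed.

(* Phi a is recovered from Phi(a)(x_3) (for g) and Phi(a)(w_1) (for f). *)
Lemma Phi_injective a b : inK a -> inK b -> Phi a = Phi b -> a = b.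
Proof.
move=> Ka Kb eq_ab.
have at_x3 := congr1 (fun P : J -> J => P (mkJ 0 0 0 0 0 0 0 1) (false, i0)) eq_ab.
have at_w1 := congr1 (fun P : J -> J => P (mkJ 0 1 0 0 0 0 0 0) (false, i2)) eq_ab.
rewrite /= !PhiK_split !Deven_mk !Dodd_mk !addE !W0E !W2E in at_x3 at_w1.
rewrite (inK_coords Ka) (inK_coords Kb); apply: mkJ_eq => //.
- by apply: (eq_from_multiple 1 at_w1); ring.
- by apply: (eq_from_multiple (- I) at_x3); ring: I_sqr.
Qed.

Lemma Phi_linear (r : F) a b :
  Phi (r *: a + b) = (fun c => r *: Phi a c + Phi b c).
Proof.
apply: functional_extensionality => c; rewrite !PhiK_split !ffunE (mkJ_eta c).
coords; apply: mkJ_eq; push_delta.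
all: rewrite -?[r *: W0 a]mulr_algl -?[r *: X0 a]mulr_algl
  -?[r *: delta (W0 a)]mulr_algl -?[r *: delta (X0 a)]mulr_algl; ring.
Qed.

Lemma Phi_homogeneous p a : inK a -> hom_map p (Phi (spr p a)).
Proof.
move=> Ka c; rewrite /mpart !PhiK_split (inK_coords Ka) (mkJ_eta c).
by case: p; rewrite [~~ _]/=; by_coords.
Qed.

Lemma Phi_bar a c : ckbarA sqrtm1 (Phi a) c = Phi a c.
Proof. by rewrite /ckbarA /tauD /= !PhiK_split (mkJ_eta c); by_coords. Qed.

Lemma mpart_phiD_even a z : mpart false (phiD sqrtm1 (Phi a)) z =
  phiJ sqrtm1 (Deven (W0 a) (phiJ sqrtm1 (phiJ sqrtm1 z))).
Proof. by rewrite /mpart /phiD /= !PhiK_split (mkJ_eta z); by_coords. Qed.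
Lemma mpart_phiD_odd a z : mpart true (phiD sqrtm1 (Phi a)) z =
  phiJ sqrtm1 (Dodd (X0 a) (phiJ sqrtm1 (phiJ sqrtm1 z))).
Proof. by rewrite /mpart /phiD /= !PhiK_split (mkJ_eta z); by_coords. Qed.
Lemma mpart_phi2D_even a z : mpart false (phi2D sqrtm1 (Phi a)) z =
  phiJ sqrtm1 (phiJ sqrtm1 (Deven (W0 a) (phiJ sqrtm1 z))).
Proof. by rewrite /mpart /phi2D /= !PhiK_split (mkJ_eta z); by_coords. Qed.
Lemma mpart_phi2D_odd a z : mpart true (phi2D sqrtm1 (Phi a)) z =
  phiJ sqrtm1 (phiJ sqrtm1 (Dodd (X0 a) (phiJ sqrtm1 z))).
Proof. by rewrite /mpart /phi2D /= !PhiK_split (mkJ_eta z); by_coords. Qed.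

Lemma Phi_mul a b : inK a -> inK b -> Phi (mulJ a b) = ckmulA sqrtm1 (Phi a) (Phi b).
Proof.
move=> Ka Kb; apply: functional_extensionality => c.
rewrite /ckmulA /tauD /comp scommE !mpart_phiD_even !mpart_phiD_odd.
rewrite !mpart_phi2D_even !mpart_phi2D_odd PhiK_split.
by rewrite (inK_coords Ka) (inK_coords Kb) (mkJ_eta c) mulE; by_coords.
Qed.

Local Notation w0 h := (@mkJ F Z h 0 0 0 0 0 0 0).
Local Notation w1 h := (@mkJ F Z 0 h 0 0 0 0 0 0).
Local Notation w2 h := (@mkJ F Z 0 0 h 0 0 0 0 0).
Local Notation w3 h := (@mkJ F Z 0 0 0 h 0 0 0 0).
Local Notation x0 h := (@mkJ F Z 0 0 0 0 h 0 0 0).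
Local Notation x1 h := (@mkJ F Z 0 0 0 0 0 h 0 0).
Local Notation x2 h := (@mkJ F Z 0 0 0 0 0 0 h 0).
Local Notation x3 h := (@mkJ F Z 0 0 0 0 0 0 0 h).

(* The products of basis monomials used in the classification of A; a zero
   product is written as the monomial w0 0, to which D0 and D1 still apply. *)
Lemma mul_w0_w1 h k : mulJ (w0 h) (w1 k) = w1 (h * k). Proof. by_coords. Qed.
Lemma mul_w0_w2 h k : mulJ (w0 h) (w2 k) = w2 (h * k). Proof. by_coords. Qed.
Lemma mul_w0_w3 h k : mulJ (w0 h) (w3 k) = w3 (h * k). Proof. by_coords. Qed.
Lemma mul_w0_x0 h k : mulJ (w0 h) (x0 k) = x0 (h * k). Proof. by_coords. Qed.
Lemma mul_w0_x1 h k : mulJ (w0 h) (x1 k) = x1 (h * k). Proof. by_coords. Qed.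
Lemma mul_w0_x2 h k : mulJ (w0 h) (x2 k) = x2 (h * k). Proof. by_coords. Qed.
Lemma mul_w0_x3 h k : mulJ (w0 h) (x3 k) = x3 (h * k). Proof. by_coords. Qed.
Lemma mul_w3_x0 h : mulJ (w3 h) (x0 1) = x3 (delta h). Proof. by_coords. Qed.
Lemma mul_w3_x0_0 k : mulJ (w3 1) (x0 k) = w0 0. Proof. by_coords. Qed.
Lemma mul_w1_w2 : mulJ (w1 1) (w2 1) = w0 0. Proof. by_coords. Qed.
Lemma mul_w1_x0 : mulJ (w1 1) (x0 1) = w0 0. Proof. by_coords. Qed.
Lemma mul_w2_x0 : mulJ (w2 1) (x0 1) = w0 0. Proof. by_coords. Qed.
Lemma mul_w1_x1 : mulJ (w1 1) (x1 1) = w0 0. Proof. by_coords. Qed.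
Lemma mul_w2_x2 : mulJ (w2 1) (x2 1) = w0 0. Proof. by_coords. Qed.
Lemma mul_w3_x3 : mulJ (w3 1) (x3 1) = w0 0. Proof. by_coords. Qed.
Lemma mul_x3_x1 : mulJ (x3 1) (x1 1) = w0 0. Proof. by_coords. Qed.
Lemma mul_x3_x2 : mulJ (x3 1) (x2 1) = w0 0. Proof. by_coords. Qed.

Section Classification.
Variables (X D0 D1 : J -> J).
Hypothesis D0_sder : is_sder delta false D0.
Hypothesis D1_sder : is_sder delta true D1.
Hypothesis X_split : forall a, X a = D0 a + D1 a.
Hypothesis X_degree : forall be a,
  X (zpr be a) = zpr (zadd (true, true) be) (X (zpr be a)).

Lemma X_additive a b : X (a + b) = X a + X b.
Proof.
have [D0_lin _] := D0_sder; have [D1_lin _] := D1_sder.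
have := D0_lin 1 a b; have := D1_lin 1 a b; rewrite !scale1r !X_split => -> ->.
by rewrite addrACA.
Qed.

Lemma D0_on_homogeneous p be m : spr p m = m -> zpr be m = m ->
  D0 m = spr p (zpr (zadd (true, true) be) (X m)).
Proof.
move=> m_par m_deg; have [_ [D0_par _]] := D0_sder; have [_ [D1_par _]] := D1_sder.
have e0 : D0 m = spr p (D0 m) by have := D0_par p m; rewrite addbF m_par.
have e1 : D1 m = spr (~~ p) (D1 m) by have := D1_par p m; rewrite addbT m_par.
have ex : X m = zpr (zadd (true, true) be) (X m) by have := X_degree be m; rewrite m_deg.
by rewrite -ex X_split spr_add e1 spr_orth addr0 -e0.
Qed.

Lemma D1_on_homogeneous p be m : spr p m = m -> zpr be m = m ->
  D1 m = spr (~~ p) (zpr (zadd (true, true) be) (X m)).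
Proof.
move=> m_par m_deg; have [_ [D0_par _]] := D0_sder; have [_ [D1_par _]] := D1_sder.
have e0 : D0 m = spr p (D0 m) by have := D0_par p m; rewrite addbF m_par.
have e1 : D1 m = spr (~~ p) (D1 m) by have := D1_par p m; rewrite addbT m_par.
have ex : X m = zpr (zadd (true, true) be) (X m) by have := X_degree be m; rewrite m_deg.
by rewrite -ex X_split spr_add e0 -{2}[p]negbK spr_orth add0r -e1.
Qed.

Ltac monomial L p be := rewrite (L p be) ?spr_evenE ?spr_oddE ?zpr00E ?zpr10E ?zpr01E ?zpr11E //;
  rewrite /zadd /= [X _]mkJ_eta ?spr_evenE ?spr_oddE ?zpr00E ?zpr10E ?zpr01E ?zpr11E
    ?W0E ?W1E ?W2E ?W3E ?X0E ?X1E ?X2E ?X3E ?spr_evenE ?spr_oddE //.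

Lemma D0_w0 h : D0 (w0 h) = w3 (W3 (X (w0 h))). Proof. monomial D0_on_homogeneous false (false,false). Qed.
Lemma D0_w1 h : D0 (w1 h) = w2 (W2 (X (w1 h))). Proof. monomial D0_on_homogeneous false (true,false). Qed.
Lemma D0_w2 h : D0 (w2 h) = w1 (W1 (X (w2 h))). Proof. monomial D0_on_homogeneous false (false,true). Qed.
Lemma D0_w3 h : D0 (w3 h) = w0 (W0 (X (w3 h))). Proof. monomial D0_on_homogeneous false (true,true). Qed.
Lemma D0_x0 h : D0 (x0 h) = x3 (X3 (X (x0 h))). Proof. monomial D0_on_homogeneous true (false,false). Qed.
Lemma D0_x1 h : D0 (x1 h) = x2 (X2 (X (x1 h))). Proof. monomial D0_on_homogeneous true (true,false). Qed.
Lemma D0_x2 h : D0 (x2 h) = x1 (X1 (X (x2 h))). Proof. monomial D0_on_homogeneous true (false,true). Qed.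
Lemma D0_x3 h : D0 (x3 h) = x0 (X0 (X (x3 h))). Proof. monomial D0_on_homogeneous true (true,true). Qed.
Lemma D1_w0 h : D1 (w0 h) = x3 (X3 (X (w0 h))). Proof. monomial D1_on_homogeneous false (false,false). Qed.
Lemma D1_w1 h : D1 (w1 h) = x2 (X2 (X (w1 h))). Proof. monomial D1_on_homogeneous false (true,false). Qed.
Lemma D1_w2 h : D1 (w2 h) = x1 (X1 (X (w2 h))). Proof. monomial D1_on_homogeneous false (false,true). Qed.
Lemma D1_w3 h : D1 (w3 h) = x0 (X0 (X (w3 h))). Proof. monomial D1_on_homogeneous false (true,true). Qed.
Lemma D1_x0 h : D1 (x0 h) = w3 (W3 (X (x0 h))). Proof. monomial D1_on_homogeneous true (false,false). Qed.
Lemma D1_x1 h : D1 (x1 h) = w2 (W2 (X (x1 h))). Proof. monomial D1_on_homogeneous true (true,false). Qed.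
Lemma D1_x2 h : D1 (x2 h) = w1 (W1 (X (x2 h))). Proof. monomial D1_on_homogeneous true (false,true). Qed.
Lemma D1_x3 h : D1 (x3 h) = w0 (W0 (X (x3 h))). Proof. monomial D1_on_homogeneous true (true,true). Qed.

Local Notation ev_1 h := (W3 (X (w0 h))).
Local Notation ev_w1 h := (W2 (X (w1 h))).
Local Notation ev_w2 h := (W1 (X (w2 h))).
Local Notation ev_w3 h := (W0 (X (w3 h))).
Local Notation ev_x h := (X3 (X (x0 h))).
Local Notation ev_x1 h := (X2 (X (x1 h))).
Local Notation ev_x2 h := (X1 (X (x2 h))).
Local Notation ev_x3 h := (X0 (X (x3 h))).
Local Notation od_1 h := (X3 (X (w0 h))).
Local Notation od_w1 h := (X2 (X (w1 h))).
Local Notation od_w2 h := (X1 (X (w2 h))).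
Local Notation od_w3 h := (X0 (X (w3 h))).
Local Notation od_x h := (W3 (X (x0 h))).
Local Notation od_x1 h := (W2 (X (x1 h))).
Local Notation od_x2 h := (W1 (X (x2 h))).
Local Notation od_x3 h := (W0 (X (x3 h))).

Ltac leibniz_coord sder q a b prod idx :=
  have [_ [_ /(_ q a b)]] := sder;
  rewrite ?spr_evenE ?spr_oddE prod ?mulr1 ?D0_w0 ?D0_w1 ?D0_w2 ?D0_w3 ?D0_x0 ?D0_x1
    ?D0_x2 ?D0_x3 ?D1_w0 ?D1_w1 ?D1_w2 ?D1_w3 ?D1_x0 ?D1_x1 ?D1_x2 ?D1_x3 [_ && _]/=;
  coords; move/(congr1 (fun v : J => v idx)); rewrite !ffunE /=.
Ltac solve_linear := let E := fresh "E" in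
  intro E; push_delta; rewrite ?(deltaD, deltaB, deltaN, delta0, hder,
    delta_scalar, deltaZ, delta1) in E;
  first [ apply: (eq_from_multiple 1 E); ring | apply: (eq_from_multiple (-1) E); ring
        | apply: (eq_from_multiple 2%:R E); ring | apply: (eq_from_multiple (-2%:R) E); ring ].
Ltac even_rel q a b prod idx :=
  leibniz_coord D0_sder q a b prod idx; solve_linear.
Ltac odd_rel q a b prod idx :=
  leibniz_coord D1_sder q a b prod idx; solve_linear.

Lemma ev_w3_expand h : ev_w3 h = - ev_1 h + h * ev_w3 1.
Proof. even_rel false (w0 h) (w3 1) mul_w0_w3 (false,i0). Qed.
Lemma ev_x3_Zlinear h : ev_x3 h = h * ev_x3 1.
Proof. even_rel false (w0 h) (x3 1) mul_w0_x3 (true,i0). Qed.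
Lemma ev_x3_1 : ev_x3 1 = 0.
Proof. even_rel true (x3 1) (x1 1) mul_x3_x1 (false,i1). Qed.
Lemma ev_x3_delta h : ev_x3 (delta h) = ev_w3 h.
Proof. even_rel false (w3 h) (x0 1) mul_w3_x0 (true,i0). Qed.
Lemma ev_x3_0 h : ev_x3 h = 0.
Proof. by rewrite ev_x3_Zlinear ev_x3_1 mulr0. Qed.
Lemma ev_w3_0 h : ev_w3 h = 0.
Proof. by rewrite -ev_x3_delta ev_x3_0. Qed.
Lemma ev_1_0 h : ev_1 h = 0.
Proof. by have := ev_w3_expand h; rewrite !ev_w3_0 mulr0 addr0 => /eqP; rewrite eq_sym oppr_eq0 => /eqP. Qed.
Lemma ev_w1_Zlinear h : ev_w1 h = h * ev_w1 1.
Proof. even_rel false (w0 h) (w1 1) mul_w0_w1 (false,i2). Qed.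
Lemma ev_w2_Zlinear h : ev_w2 h = h * ev_w2 1.
Proof. even_rel false (w0 h) (w2 1) mul_w0_w2 (false,i1). Qed.
Lemma ev_w2_1 : ev_w2 1 = - ev_w1 1.
Proof. even_rel false (w1 1) (w2 1) mul_w1_w2 (false,i0). Qed.
Lemma ev_x_Zlinear h : ev_x h = h * ev_x 1.
Proof. leibniz_coord D0_sder false (w0 h) (x0 1) mul_w0_x0 (true,i3); rewrite !ev_1_0; solve_linear. Qed.
Lemma ev_x_1 : ev_x 1 = delta (ev_w1 1).
Proof. even_rel false (w1 1) (x0 1) mul_w1_x0 (true,i2). Qed.
Lemma ev_x1_Zlinear h : ev_x1 h = h * ev_x1 1.
Proof. leibniz_coord D0_sder false (w0 h) (x1 1) mul_w0_x1 (true,i2); rewrite !ev_1_0; solve_linear. Qed.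
Lemma ev_x1_1 : ev_x1 1 = ev_w1 1.
Proof. even_rel false (w1 1) (x1 1) mul_w1_x1 (true,i3). Qed.
Lemma ev_x2_Zlinear h : ev_x2 h = h * ev_x2 1.
Proof. leibniz_coord D0_sder false (w0 h) (x2 1) mul_w0_x2 (true,i1); rewrite !ev_1_0; solve_linear. Qed.
Lemma ev_x2_1 : ev_x2 1 = ev_w2 1.
Proof. even_rel false (w2 1) (x2 1) mul_w2_x2 (true,i3). Qed.

Lemma od_w1_expand h : od_w1 h = - od_1 h + h * od_w1 1.
Proof. odd_rel false (w0 h) (w1 1) mul_w0_w1 (true,i2). Qed.
Lemma od_w2_expand h : od_w2 h = od_1 h + h * od_w2 1.
Proof. odd_rel false (w0 h) (w2 1) mul_w0_w2 (true,i1). Qed.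
Lemma od_w3_Zlinear h : od_w3 h = h * od_w3 1.
Proof. odd_rel false (w0 h) (w3 1) mul_w0_w3 (true,i0). Qed.
Lemma od_x_expand h : od_x h = od_1 h + h * od_x 1.
Proof. odd_rel false (w0 h) (x0 1) mul_w0_x0 (false,i3). Qed.
Lemma od_x1_Zlinear h : od_x1 h = h * od_x1 1.
Proof. odd_rel false (w0 h) (x1 1) mul_w0_x1 (false,i2). Qed.
Lemma od_x2_Zlinear h : od_x2 h = h * od_x2 1.
Proof. odd_rel false (w0 h) (x2 1) mul_w0_x2 (false,i1). Qed.
Lemma od_x3_Zlinear h : od_x3 h = h * od_x3 1.
Proof. odd_rel false (w0 h) (x3 1) mul_w0_x3 (false,i0). Qed.
Lemma od_w3_1 : od_w3 1 = od_x3 1.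
Proof. odd_rel false (w3 1) (x3 1) mul_w3_x3 (false,i3). Qed.
Lemma od_x1_1 : od_x1 1 = od_x3 1.
Proof. odd_rel true (x3 1) (x1 1) mul_x3_x1 (true,i1). Qed.
Lemma od_x2_1 : od_x2 1 = - od_x3 1.
Proof. odd_rel true (x3 1) (x2 1) mul_x3_x2 (true,i2). Qed.
Lemma od_w1_1 : od_w1 1 = 0.
Proof. odd_rel false (w1 1) (x0 1) mul_w1_x0 (false,i2). Qed.
Lemma od_w2_1 : od_w2 1 = 0.
Proof. odd_rel false (w2 1) (x0 1) mul_w2_x0 (false,i1). Qed.
Lemma od_x_formula k : od_x k = k * delta (od_x3 1) - od_x3 1 * delta k.
Proof.
leibniz_coord D1_sder false (w3 1) (x0 k) mul_w3_x0_0 (false,i0).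
by rewrite !od_w3_1; solve_linear.
Qed.

Section ClosedForms.
Variables (f G : Z).
Hypothesis f_def : ev_w1 1 = f.
Hypothesis G_def : od_x3 1 = G.

Lemma ev_w1_closed h : ev_w1 h = h * f. Proof. by rewrite ev_w1_Zlinear f_def. Qed.
Lemma ev_w2_closed h : ev_w2 h = - (h * f).
Proof. by rewrite ev_w2_Zlinear ev_w2_1 f_def mulrN. Qed.
Lemma ev_x_closed h : ev_x h = h * delta f. Proof. by rewrite ev_x_Zlinear ev_x_1 f_def. Qed.
Lemma ev_x1_closed h : ev_x1 h = h * f. Proof. by rewrite ev_x1_Zlinear ev_x1_1 f_def. Qed.
Lemma ev_x2_closed h : ev_x2 h = - (h * f).
Proof. by rewrite ev_x2_Zlinear ev_x2_1 ev_w2_1 f_def mulrN. Qed.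
Lemma od_x_closed h : od_x h = h * delta G - G * delta h. Proof. by rewrite od_x_formula G_def. Qed.
Lemma od_1_closed h : od_1 h = - (G * delta h).
Proof. by have := od_x_expand h; rewrite !od_x_closed; solve_linear. Qed.
Lemma od_w1_closed h : od_w1 h = G * delta h.
Proof. by rewrite od_w1_expand od_w1_1 mulr0 addr0 od_1_closed opprK. Qed.
Lemma od_w2_closed h : od_w2 h = - (G * delta h).
Proof. by rewrite od_w2_expand od_w2_1 mulr0 addr0 od_1_closed. Qed.
Lemma od_w3_closed h : od_w3 h = h * G. Proof. by rewrite od_w3_Zlinear od_w3_1 G_def. Qed.
Lemma od_x1_closed h : od_x1 h = h * G. Proof. by rewrite od_x1_Zlinear od_x1_1 G_def. Qed.
Lemma od_x2_closed h : od_x2 h = - (h * G).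
Proof. by rewrite od_x2_Zlinear od_x2_1 G_def mulrN. Qed.
Lemma od_x3_closed h : od_x3 h = h * G. Proof. by rewrite od_x3_Zlinear G_def. Qed.

Lemma X_is_Phi c : X c = Deven f c + Dodd (- I * G) c.
Proof.
rewrite [in LHS](mkJ_eta c) mkJ_sum !X_additive !X_split.
rewrite D0_w0 D0_w1 D0_w2 D0_w3 D0_x0 D0_x1 D0_x2 D0_x3.
rewrite D1_w0 D1_w1 D1_w2 D1_w3 D1_x0 D1_x1 D1_x2 D1_x3.
rewrite ev_1_0 ev_w1_closed ev_w2_closed ev_w3_0 ev_x_closed ev_x1_closed ev_x2_closed ev_x3_0.
rewrite od_1_closed od_w1_closed od_w2_closed od_w3_closed.
rewrite od_x_closed od_x1_closed od_x2_closed od_x3_closed.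
by rewrite [in RHS](mkJ_eta c); by_coords.
Qed.
End ClosedForms.
End Classification.

Lemma Phi_surjective X : isDer_deg delta (true, true) X -> exists a, inK a /\ Phi a = X.
Proof.
case=> [[D0 [D1 [D0_sder [D1_sder X_split]]]] X_degree].
pose f := W2 (X (mkJ 0 1 0 0 0 0 0 0)); pose G := W0 (X (mkJ 0 0 0 0 0 0 0 1)).
exists (mkJ f 0 0 0 (- I * G) 0 0 0); split.
  by move=> [[] [[|[|[|[|k]]]] Hk]] //=; rewrite ffunE.
apply: functional_extensionality => c; rewrite PhiK_split W0E X0E.
by rewrite (X_is_Phi D0_sder D1_sder X_split X_degree (erefl f) (erefl G)).
Qed.

End CKDerivations.

Theorem theorem6p1 (F : fieldType) (Z : comAlgType F)
  (delta : {linear Z -> Z}) (sqrtm1 : F)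
  (hchar : (2%:R : F) != 0)
  (hsqrt : sqrtm1 * sqrtm1 = -1)
  (hder : forall f g : Z, delta (f * g) = delta f * g + f * delta g)
  (hspan : forall z : Z, exists s : seq (Z * Z), z = \sum_(u <- s) u.1 * delta u.2) :
  let inA := isDer_deg delta (true, true) in
  (* bar X = X on A *)
  (forall X, inA X -> ckbarA sqrtm1 X = X) /\
  (* Phi : K -> A is an isomorphism of superalgebras *)
  (forall a, inK a -> inA (PhiK delta sqrtm1 a)) /\
  (forall a b, inK a -> inK b -> PhiK delta sqrtm1 a = PhiK delta sqrtm1 b -> a = b) /\
  (forall X, inA X -> exists a, inK a /\ PhiK delta sqrtm1 a = X) /\
  (forall (r : F) a b, inK a -> inK b ->
     PhiK delta sqrtm1 (r *: a + b) = (fun c => r *: PhiK delta sqrtm1 a c + PhiK delta sqrtm1 b c)) /\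
  (forall p a, inK a -> hom_map p (PhiK delta sqrtm1 (spr p a))) /\
  (forall a b, inK a -> inK b ->
     PhiK delta sqrtm1 (mulJ delta a b)
     = ckmulA sqrtm1 (PhiK delta sqrtm1 a) (PhiK delta sqrtm1 b)).
Proof.
move=> inA; split.
  move=> X /(Phi_surjective hsqrt hder) [a [_ <-]].
  by apply: functional_extensionality => c; apply: Phi_bar.
split; first by move=> a _; apply: Phi_in_A.
split; first by move=> a b; apply: Phi_injective.
split; first by move=> X; apply: Phi_surjective.
split; first by move=> r a b _ _; apply: Phi_linear.
split; first by move=> p a; apply: Phi_homogeneous.
by move=> a b; apply: Phi_mul.
Qed.
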